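(* Let $h>0$ and let $\gamma=(\gamma^\tau,\gamma^\omega):[0,1]\to\mathbb{R}^{1+d}$ satisfy the Brownian-like scaling assumption described in the context. Then for every multi-index $\alpha\in\mathcal{A}$, $$\mathbb{E}\big[\|I^\gamma_\alpha(1)\|^2\big]=O\big(h^{2\,\mathrm{ord}(\alpha)}\big).$$
   Context: Brownian-like scaling assumption: $\gamma$ depends on the step size $h>0$; it is a continuous piecewise linear path with a fixed number $m\in\mathbb{N}$ of linear pieces, vertices $0=r_0<\dots<r_m=1$, and almost surely finite length; writing $\gamma_{r_i,r_{i+1}}=\gamma(r_{i+1})-\gamma(r_i)$, (1) the increments $\gamma^\tau_{r_i,r_{i+1}}$ are deterministic; (2) $\gamma^\tau_{r_i,r_{i+1}}=O(h)$ and for every $j\in\{1,\dots,d\}$ and $k\in\mathbb{N}$, $\mathbb{E}[|(\gamma^\omega_{r_i,r_{i+1}})_j|^{2k}]=O(h^k)$. $O(h^q)$ means bounded by a constant independent of $h$ times $h^q$ for all sufficiently small $h$. Multi-indices: $\mathcal{A}=\bigcup_{n\ge0}\{\tau,\omega\}^n$; for $\alpha=(\alpha_1,\dots,\alpha_n)$, $|\alpha|_\tau$ and $|\alpha|_\omega$ are the numbers of entries equal to $\tau$ and $\omega$, and $\mathrm{ord}(\alpha)=|\alpha|_\tau+\tfrac12|\alpha|_\omega$. The iterated integral $I^\gamma_\alpha(1)\in(\mathbb{R}^d)^{\otimes|\alpha|_\omega}$ is $$I^\gamma_\alpha(1)=\int_0^1\int_0^{r_1}\cdots\int_0^{r_{n-1}}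 d\gamma^{\alpha_1}(r_n)\,d\gamma^{\alpha_2}(r_{n-1})\cdots d\gamma^{\alpha_n}(r_1),$$ where a $\tau$-entry contributes the scalar differential $d\gamma^\tau$ and an $\omega$-entry contributes a tensor factor $d\gamma^\omega\in\mathbb{R}^d$ (the tensor factors taken in the order of the entries); integrals are Riemann–Stieltjes; $I^\gamma_{\emptyset}(1)=1$. *)

From HB Require Import structures.
From mathcomp Require Import all_boot all_order all_algebra.
From mathcomp Require Import all_classical all_reals all_analysis.
Set Implicit Arguments.
Unset Strict Implicit.
Unset Printing Implicit Defensive.
Import Order.TTheory GRing.Theory Num.Theory.
Import numFieldNormedType.Exports.
Local Open Scope classical_set_scope.
Local Open Scope ring_scope.

(* Letters of multi-indices: tau (time/drift) and omega (noise). *)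
Inductive letter := tau | omega.

Definition is_tau (a : letter) : bool := if a is tau then true else false.
Definition is_omega (a : letter) : bool := if a is omega then true else false.

Definition ntau (al : seq letter) : nat := count is_tau al.
Definition nomega (al : seq letter) : nat := count is_omega al.

(* 2 * ord(alpha) = 2 |alpha|_tau + |alpha|_omega  (a natural number) *)
Definition two_ord (al : seq letter) : nat := 2 * ntau al + nomega al.

Section PL.
Variable R : realType.

Definition vertices (m : nat) (r : nat -> R) : Prop :=
  r 0%N = 0 /\ r m = 1 /\ (forall i, (i < m)%N -> r i < r i.+1).

Definition linear_on_pieces (m : nat) (r : nat -> R) (x : R -> R) : Prop :=
  forall i, (i < m)%N -> forall s, r i <= s <= r i.+1 ->
    x s = x (r i) + (s - r i) / (r i.+1 - r i) * (x (r i.+1) - x (r i)).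

Definition pl_slope (m : nat) (r : nat -> R) (x : R -> R) (s : R) : R :=
  \sum_(i < m) (if (r i <= s) && (s < r i.+1)
                then (x (r i.+1) - x (r i)) / (r i.+1 - r i) else 0).

(* Riemann--Stieltjes integral int_0^t f(s) dx(s) for a piecewise linear
   integrator x (dx(s) = x'(s) ds on each piece). *)
Definition rs_int (m : nat) (r : nat -> R) (x : R -> R) (f : R -> R) (t : R) : R :=
  \int[lebesgue_measure]_(s in `[0, t]) (f s * pl_slope m r x s).

Definition chan (d : nat) (gt : R -> R) (gw : R -> 'rV[R]_d)
    (c : option 'I_d) : R -> R :=
  match c with None => gt | Some j => fun s => gw s ord0 j end.

(* scalar iterated integral, channels listed in reverse order:
   iint_rev (c :: cs) t = int_0^t iint_rev cs (s) dx_c(s) *)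
Fixpoint iint_rev (d m : nat) (r : nat -> R) (gt : R -> R) (gw : R -> 'rV[R]_d)
    (cs : seq (option 'I_d)) (t : R) : R :=
  match cs with
  | [::] => 1
  | c :: cs' => rs_int m r (chan gt gw c) (iint_rev m r gt gw cs') t
  end.

(* iint [c_1;...;c_n] t = int_0^t int_0^{r_1} ... dx_{c_1}(r_n) ... dx_{c_n}(r_1) *)
Definition iint (d m : nat) (r : nat -> R) (gt : R -> R) (gw : R -> 'rV[R]_d)
    (cs : seq (option 'I_d)) (t : R) : R :=
  iint_rev m r gt gw (rev cs) t.
End PL.

Fixpoint fill (d : nat) (al : seq letter) (w : seq 'I_d) : seq (option 'I_d) :=
  match al with
  | [::] => [::]
  | tau :: al' => None :: fill al' w
  | omega :: al' =>
      match w with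
      | j :: w' => Some j :: fill al' w'
      | [::] => None :: fill al' [::] (* never used: w has length |al|_omega *)
      end
  end.

(* || I^gamma_alpha(1) ||^2 : squared Euclidean (Hilbert--Schmidt) norm of the
   tensor in (R^d)^{(x) |alpha|_omega}; its component at the coordinate word w
   is the scalar iterated integral with d gamma^omega replaced by
   d gamma^omega_{w_k} in the k-th omega slot. *)
Definition sig_norm2 (R : realType) (d m : nat) (r : nat -> R)
    (gt : R -> R) (gw : R -> 'rV[R]_d) (al : seq letter) : R :=
  \sum_(w : (nomega al).-tuple 'I_d) (iint m r gt gw (fill al w) 1) ^+ 2.

(* Along a piecewise linear integrator, the Riemann-Stieltjes integral of a
   function bounded by B is at most B times the variation of the integrator
   over the vertices; so every scalar component of I^gamma_alpha(1) is at most
   the product, over the letters of alpha, of the variations of the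
   corresponding channels.  A tau-letter contributes O(h) surely, an
   omega-letter at most S, the sum over pieces and coordinates of the
   |omega-increments|.  Hence ||I^gamma_alpha(1)||^2 <= C h^(2|alpha|_tau)
   S^(2|alpha|_omega), and by the power-mean inequality E[S^(2k)] is at most a
   constant times the sum of the moments E|omega-increment|^(2k) = O(h^k).
   Only finitely many O-constants occur, so they can be made uniform. *)

From HB Require Import structures.
From mathcomp Require Import all_boot all_order all_algebra.
From mathcomp Require Import all_classical all_reals all_analysis.
From mathcomp Require Import lra ring measurable_realfun.
Set Implicit Arguments.
Unset Strict Implicit.
Unset Printing Implicit Defensive.
Import Order.TTheory GRing.Theory Num.Theory.
Import numFieldNormedType.Exports.
Local Open Scope ring_scope.

Section integral_bounds.
Context d (T : measurableType d) (R : realType) (mu : {measure set T -> \bar R}).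
Local Open Scope ereal_scope.

(* The iterated integrands are not known to be measurable, so monotonicity is
   taken directly from the supremum definition of the integral. *)
Lemma ge0_le_integralT (f g : T -> \bar R) :
  (forall x, 0 <= f x) -> (forall x, f x <= g x) ->
  \int[mu]_x f x <= \int[mu]_x g x.
Proof.
move=> f0 fg; have g0 x : 0 <= g x by exact: le_trans (f0 x) (fg x).
rewrite (ge0_integralTE mu f0) (ge0_integralTE mu g0).
apply: ereal_sup_le => _ [h /= hf <-]; exists h => //= x.
exact: le_trans (hf x) (fg x).
Qed.

Lemma normr_Rintegral_le (D : set T) (f : T -> R) (G : T -> \bar R) (M : R) :
  (forall x, D x -> (`|f x|)%:E <= G x) -> (forall x, 0 <= G x) ->
  \int[mu]_x G x <= M%:E -> (`|\int[mu]_(x in D) f x| <= M)%R.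
Proof.
move=> fG G0 GM.
have part_le (k : T -> \bar R) : (forall x, 0 <= k x) ->
    (forall x, D x -> k x <= (`|f x|)%:E) ->
    0 <= \int[mu]_(x in D) k x <= M%:E.
  move=> k0 kf; rewrite integral_ge0 //= integral_mkcond.
  apply: le_trans GM; apply: ge0_le_integralT => x; rewrite /patch.
    by case: ifP.
  case: ifP => [/set_mem Dx|_]; last exact: G0.
  exact: le_trans (kf x Dx) (fG x Dx).
have /andP[p0 pM] : 0 <= \int[mu]_(x in D) ((EFin \o f)^\+ x) <= M%:E.
  apply: part_le => [x|x _]; first exact: funepos_ge0.
  by rewrite funeposE -EFin_max lee_fin ge_max normr_ge0 ler_norm.
have /andP[n0 nM] : 0 <= \int[mu]_(x in D) ((EFin \o f)^\- x) <= M%:E.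
  apply: part_le => [x|x _]; first exact: funeneg_ge0.
  by rewrite funenegE -EFinN -EFin_max lee_fin ge_max normr_ge0 -normrN ler_norm.
rewrite /Rintegral integralE; move: p0 pM n0 nM.
case: (\int[mu]_(x in D) _) => [a| |] //; case: (\int[mu]_(x in D) _) => [b| |] //.
rewrite !lee_fin /= => a0 aM b0 bM; rewrite ler_norml; lra.
Qed.

End integral_bounds.

Lemma exprn_sum_le (R : realDomainType) (I : finType) (a : I -> R) n :
  (0 < n)%N -> (forall i, 0 <= a i) ->
  (\sum_i a i) ^+ n <= #|I|%:R ^+ n * \sum_i a i ^+ n.
Proof.
move=> n_gt0 a0; have [j _|I0] := pickP (@predT I); last first.
  by rewrite !big_pred0 // expr0n gtn_eqF // mulr0.
case: (@arg_maxP _ R I j xpredT a isT) => k _ max_k.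
have a_le : \sum_i a i <= #|I|%:R * a k.
  by rewrite mulr_natl -sumr_const; apply: ler_sum => i _; exact: max_k.
apply: le_trans (lerXn2r _ _ _ a_le) _; rewrite ?nnegrE ?sumr_ge0 //.
  by rewrite mulr_ge0.
rewrite exprMn ler_wpM2l ?exprn_ge0 // (bigD1 k) //= lerDl.
by apply: sumr_ge0 => i _; exact: exprn_ge0.
Qed.

Lemma finite_uniform_bounds (R : realDomainType) (I : finType) (Q : I -> R -> R -> Prop) :
  (forall i, exists C h0, 0 < h0 /\ forall h, 0 < h -> h < h0 -> Q i C h) ->
  exists C : I -> R, exists h0, 0 < h0 /\
    forall i h, 0 < h -> h < h0 -> Q i (C i) h.
Proof.
move=> bounds.
have /fin_all_exists[C /fin_all_exists[h0 h0P]] : forall i, exists C h0,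
    0 < h0 /\ forall h, 0 < h -> h < h0 -> Q i C h by [].
exists C, (\big[Num.min/1]_i h0 i); split.
  by apply/bigmin_gtP; split => // i _; exact: (h0P i).1.
move=> i h h_gt0 lt_h; apply: (h0P i).2 => //.
by apply: lt_le_trans lt_h _; exact: bigmin_le.
Qed.

Section expectation_bounds.
Context d (T : measurableType d) (R : realType) (P : probability T R).
Local Open Scope ereal_scope.

Lemma expectation_le_scale (f g : T -> R) (c : R) : (0 <= c)%R ->
  measurable_fun setT g -> (forall x, 0 <= g x)%R ->
  (forall x, 0 <= f x <= c * g x)%R -> 'E_P[f] <= c%:E * 'E_P[g].
Proof.
move=> c0 mg g0 fg; rewrite !unlock -ge0_integralZl_EFin //; first last.
- exact/measurable_EFinP.
- by move=> x _; rewrite lee_fin.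
by apply: ge0_le_integralT => x; rewrite lee_fin; case/andP: (fg x).
Qed.

Lemma ge0_expectation_sum (I : finType) (X : I -> T -> R) :
  (forall i, measurable_fun setT (X i)) -> (forall i x, 0 <= X i x)%R ->
  'E_P[fun x => (\sum_i X i x)%R] = \sum_i 'E_P[X i].
Proof.
move=> mX X0; rewrite unlock; under eq_integral do rewrite -sumEFin.
by rewrite ge0_integral_sum // => [i|i x _]; [exact/measurable_EFinP|rewrite lee_fin].
Qed.

(* For k = 0 the power-mean bound fails when I is empty, hence the case split
   in the constant. *)
Lemma expectation_exprn_sum_le (I : finType) (X : I -> T -> R) k (C : I -> R) (h : R) :
  (forall i, measurable_fun setT (X i)) ->
  (forall i, 'E_P[fun x => (`|X i x| ^+ (2 * k))%R] <= (C i * h ^+ k)%:E) ->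
  'E_P[fun x => ((\sum_i `|X i x|) ^+ (2 * k))%R] <=
    ((if k is 0 then 1 else #|I|%:R ^+ (2 * k) * \sum_i C i) * h ^+ k)%:E.
Proof.
case: k => [|k] mX momentX.
  have -> : (fun x => (\sum_i `|X i x|) ^+ (2 * 0))%R = cst 1%R.
    by apply/funext => x; rewrite muln0 expr0.
  by rewrite expectation_cst expr0 mul1r.
set n := (2 * k.+1)%N; have n_gt0 : (0 < n)%N by rewrite muln_gt0.
have mXn i : measurable_fun setT (fun x => `|X i x| ^+ n)%R.
  by apply: measurable_funX; apply: measurableT_comp => //; exact: normr_measurable.
apply: le_trans (@expectation_le_scale _ (fun x => \sum_i `|X i x| ^+ n)%R
  (#|I|%:R ^+ n) _ _ _ _) _.
- exact: exprn_ge0.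
- exact: measurable_sum.
- by move=> x; apply: sumr_ge0 => i _; exact: exprn_ge0.
- by move=> x; rewrite exprn_ge0 ?sumr_ge0 //= exprn_sum_le.
rewrite ge0_expectation_sum //.
rewrite -mulrA EFinM lee_wpmul2l ?lee_fin ?exprn_ge0 // mulr_suml -sumEFin.
exact: lee_sum.
Qed.

End expectation_bounds.

Section piecewise_linear.
Context (R : realType) (m : nat) (r : nat -> R).
Hypothesis r_incr : forall i, (i < m)%N -> r i < r i.+1.

Definition vertex_variation (x : R -> R) : R :=
  \sum_(i < m) `|x (r i.+1) - x (r i)|.

Lemma vertex_variation_ge0 x : 0 <= vertex_variation x.
Proof. exact: sumr_ge0. Qed.

Let piece (i : 'I_m) : set R := `[r i, r i.+1[%classic.

Let dr_gt0 (i : 'I_m) : 0 < r i.+1 - r i.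
Proof. by rewrite subr_gt0 r_incr. Qed.

Lemma normr_pl_slope_le x s :
  `|pl_slope m r x s| <=
  \sum_(i < m) `|x (r i.+1) - x (r i)| / (r i.+1 - r i) * \1_(piece i) s.
Proof.
apply: le_trans (ler_norm_sum _ _ _) _; apply: ler_sum => i _.
rewrite indicE (_ : (s \in piece i) = (r i <= s) && (s < r i.+1)); last first.
  by apply/idP/idP; rewrite in_setE /piece /= in_itv.
case: ifP => _; last by rewrite normr0 mulr0.
by rewrite mulr1 normrM [`|_^-1|]ger0_norm // invr_ge0 ltW.
Qed.

Lemma integral_pl_step (c : 'I_m -> R) : (forall i, 0 <= c i) ->
  (\int[lebesgue_measure]_s (\sum_(i < m) (c i * \1_(piece i) s)%:E) =
   (\sum_(i < m) c i * (r i.+1 - r i))%:E)%E.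
Proof.
move=> c0; rewrite ge0_integral_sum //; first last.
- by move=> i s _; rewrite lee_fin mulr_ge0 // indicE ler0n.
- move=> i; apply/measurable_EFinP; apply: measurable_funM => //.
  by apply: measurable_indic; exact: measurable_itv.
rewrite -sumEFin; apply: eq_bigr => i _.
under eq_integral do rewrite EFinM.
rewrite ge0_integralZl_EFin //; last first.
  by apply/measurable_EFinP; apply: measurable_indic; exact: measurable_itv.
rewrite integral_indic //; last exact: measurable_itv.
by rewrite setIT /piece /= lebesgue_measure_itv /= lte_fin r_incr // -EFinD -EFinM.
Qed.

Lemma normr_rs_int_le x f t B : 0 <= B -> (forall s, `|f s| <= B) ->
  `|rs_int m r x f t| <= B * vertex_variation x.
Proof.
move=> B0 fB; pose c (i : 'I_m) := B * (`|x (r i.+1) - x (r i)| / (r i.+1 - r i)).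
have c0 i : 0 <= c i by rewrite mulr_ge0 // divr_ge0 // ltW.
rewrite /rs_int; apply: (@normr_Rintegral_le _ _ _ lebesgue_measure _ _
  (fun s => \sum_(i < m) (c i * \1_(piece i) s)%:E)%E).
- move=> s _; rewrite sumEFin lee_fin normrM.
  apply: le_trans (ler_pM _ _ (fB s) (normr_pl_slope_le x s)) _ => //.
  by rewrite mulr_sumr; apply: ler_sum => i _; rewrite mulrA.
- by move=> s; apply: sume_ge0 => i _; rewrite lee_fin mulr_ge0 // indicE ler0n.
- rewrite integral_pl_step // lee_fin mulr_sumr; apply: ler_sum => i _.
  by rewrite /c -mulrA divfK // gt_eqF.
Qed.

End piecewise_linear.

Lemma prod_fill (V : comPzSemiRingType) d (F : option 'I_d -> V) al (w : seq 'I_d) :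
  size w = nomega al ->
  \prod_(c <- fill al w) F c = F None ^+ ntau al * \prod_(j <- w) F (Some j).
Proof.
elim: al w => [|[] al IH] w /=.
- by case: w => // _; rewrite !big_nil mulr1.
- by move=> sw; rewrite big_cons IH // exprS mulrA.
- by case: w => [|j w] //= [sw]; rewrite !big_cons IH // mulrCA.
Qed.

Section signature_bound.
Context (R : realType) (d m : nat) (r : nat -> R).
Hypothesis r_incr : forall i, (i < m)%N -> r i < r i.+1.
Variables (gt : R -> R) (gw : R -> 'rV[R]_d).

Lemma normr_iint_rev_le cs t :
  `|iint_rev m r gt gw cs t| <= \prod_(c <- cs) vertex_variation m r (chan gt gw c).
Proof.
elim: cs t => [|c cs IH] t /=; first by rewrite big_nil normr1.
rewrite big_cons mulrC; apply: normr_rs_int_le => //.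
by apply: prodr_ge0 => c' _; exact: vertex_variation_ge0.
Qed.

Lemma sig_norm2_le al K : vertex_variation m r gt <= K ->
  sig_norm2 m r gt gw al <= #|{: (nomega al).-tuple 'I_d}|%:R *
    (K ^+ (2 * ntau al) *
     (\sum_(p : 'I_d * 'I_m) `|gw (r p.2.+1) ord0 p.1 - gw (r p.2) ord0 p.1|)
       ^+ (2 * nomega al)).
Proof.
move=> var_gt_le; set S := \sum_p _.
have var_gw_le j : vertex_variation m r (chan gt gw (Some j)) <= S.
  rewrite /S -(pair_bigA _ (fun (j : 'I_d) (i : 'I_m) =>
    `|gw (r i.+1) ord0 j - gw (r i) ord0 j|)).
  rewrite (bigD1 j) //= lerDl; apply: sumr_ge0 => j' _; exact: sumr_ge0.
have iint_le (w : (nomega al).-tuple 'I_d) :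
    `|iint m r gt gw (fill al w) 1| <= K ^+ ntau al * S ^+ nomega al.
  apply: le_trans (normr_iint_rev_le _ _) _; rewrite big_rev prod_fill ?size_tuple //.
  apply: ler_pM.
  - exact/exprn_ge0/vertex_variation_ge0.
  - by apply: prodr_ge0 => j _; exact: vertex_variation_ge0.
  - have var_ge0 := vertex_variation_ge0 m r (chan gt gw None).
    by apply: lerXn2r; rewrite // nnegrE // (le_trans var_ge0).
  - apply: (@le_trans _ _ (\prod_(j <- w) S)).
      by apply: ler_prod => j _; rewrite vertex_variation_ge0 var_gw_le.
    by rewrite big_const_seq count_predT iter_mulr_1 size_tuple.
rewrite /sig_norm2 mulr_natl -sumr_const; apply: ler_sum => w _.
rewrite -real_normK ?num_real // (mulnC 2) (mulnC 2) !exprM -exprMn.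
by apply: lerXn2r; rewrite ?nnegrE ?iint_le // (le_trans _ (iint_le w)).
Qed.

End signature_bound.

Lemma expectation_sig_norm2_le (R : realType) dT (T : measurableType dT)
    (P : probability T R) d m (r : nat -> R) (gt : T -> R -> R)
    (gw : T -> R -> 'rV[R]_d) al K :
  (forall i, (i < m)%N -> r i < r i.+1) -> 0 <= K ->
  (forall i, (i < m)%N -> forall j : 'I_d, measurable_fun setT
     (fun om => gw om (r i.+1) ord0 j - gw om (r i) ord0 j)) ->
  (forall om, vertex_variation m r (gt om) <= K) ->
  ('E_P[fun om => sig_norm2 m r (gt om) (gw om) al] <=
   (#|{: (nomega al).-tuple 'I_d}|%:R * K ^+ (2 * ntau al))%:E *
   'E_P[fun om => ((\sum_(p : 'I_d * 'I_m)
          `|gw om (r p.2.+1) ord0 p.1 - gw om (r p.2) ord0 p.1|) ^+ (2 * nomega al))%R])%E.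
Proof.
move=> r_incr K_ge0 measurable_incr var_gt_le.
apply: expectation_le_scale => [|||om].
- by rewrite mulr_ge0 ?exprn_ge0.
- apply: measurable_funX; apply: measurable_sum => p.
  apply: measurableT_comp; first exact: normr_measurable.
  exact: measurable_incr p.2 (ltn_ord p.2) p.1.
- by move=> om; rewrite exprn_ge0 ?sumr_ge0.
rewrite sumr_ge0 /= => [|w _]; last exact: sqr_ge0.
by rewrite -mulrA sig_norm2_le.
Qed.

Theorem lemma3p4 (R : realType) (dT : measure_display) (T : measurableType dT)
  (P : probability T R) (d m : nat)
  (r : R -> nat -> R)                      (* vertices, for each step size h *)
  (gt : R -> T -> R -> R)                  (* gamma^tau, for each h and sample *)
  (gw : R -> T -> R -> 'rV[R]_d) :         (* gamma^omega, for each h and sample *)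
  (forall h, 0 < h -> vertices m (r h)) ->
  (forall h, 0 < h -> forall om,
     linear_on_pieces m (r h) (gt h om) /\
     forall j : 'I_d, linear_on_pieces m (r h) (fun s => gw h om s ord0 j)) ->
  (* the omega-increments are random variables *)
  (forall h, 0 < h -> forall i, (i < m)%N -> forall j : 'I_d,
     measurable_fun [set: T]
       (fun om => gw h om (r h i.+1) ord0 j - gw h om (r h i) ord0 j)) ->
  (* (1) tau-increments are deterministic *)
  (forall h, 0 < h -> forall i, (i < m)%N -> forall om om',
     gt h om (r h i.+1) - gt h om (r h i) = gt h om' (r h i.+1) - gt h om' (r h i)) ->
  (* (2a) tau-increments are O(h) *)
  (forall i, (i < m)%N -> exists C : R, exists h0 : R, 0 < h0 /\
     forall h, 0 < h -> h < h0 -> forall om,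
       `|gt h om (r h i.+1) - gt h om (r h i)| <= C * h) ->
  (* (2b) E |(gamma^omega increment)_j|^{2k} = O(h^k) *)
  (forall i, (i < m)%N -> forall (j : 'I_d) (k : nat),
     exists C : R, exists h0 : R, 0 < h0 /\
     forall h, 0 < h -> h < h0 ->
       ('E_P[fun om => (`|gw h om (r h i.+1) ord0 j - gw h om (r h i) ord0 j| ^+ (2 * k))%R]
         <= (C * h ^+ k)%:E)%E) ->
  forall al : seq letter,
    exists C : R, exists h0 : R, 0 < h0 /\
    forall h, 0 < h -> h < h0 ->
      ('E_P[fun om => (sig_norm2 m (r h) (gt h om) (gw h om) al)%R]
        <= (C * h ^+ two_ord al)%:E)%E.
Proof.
move=> vertices_r _ measurable_incr _ tau_incr_O omega_moment_O al.
pose X h (p : 'I_d * 'I_m) om :=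
  gw h om (r h p.2.+1) ord0 p.1 - gw h om (r h p.2) ord0 p.1.
have [Ct [h1 [h1_gt0 tau_incr_le]]] := @finite_uniform_bounds R 'I_m
  (fun i C h => forall om, `|gt h om (r h i.+1) - gt h om (r h i)| <= C * h)
  (fun i => tau_incr_O i (ltn_ord i)).
have [Cw [h2 [h2_gt0 omega_moment_le]]] := @finite_uniform_bounds R ('I_d * 'I_m)%type
  (fun p C h => 'E_P[fun om => (`|X h p om| ^+ (2 * nomega al))%R]
     <= (C * h ^+ nomega al)%:E)%E
  (fun p => omega_moment_O p.2 (ltn_ord p.2) p.1 (nomega al)).
pose Kt := \sum_i `|Ct i|.
pose Cw_sum := if nomega al is 0 then 1
  else #|{: 'I_d * 'I_m}|%:R ^+ (2 * nomega al) * \sum_p Cw p.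
pose N := #|{: (nomega al).-tuple 'I_d}|%:R : R.
exists (N * Kt ^+ (2 * ntau al) * Cw_sum), (Num.min h1 h2).
split=> [|h h_gt0]; first by rewrite lt_min h1_gt0 h2_gt0.
rewrite lt_min => /andP[lt_h1 lt_h2].
have measurable_X p : measurable_fun setT (X h p).
  exact: measurable_incr h h_gt0 p.2 (ltn_ord p.2) p.1.
have var_gt_le om : vertex_variation m (r h) (gt h om) <= Kt * h.
  rewrite /Kt mulr_suml; apply: ler_sum => i _.
  apply: le_trans (tau_incr_le i h h_gt0 lt_h1 om) _.
  by apply: ler_wpM2r; [exact: ltW | exact: ler_norm].
have [_ [_ r_incr]] := vertices_r h h_gt0.
apply: le_trans (expectation_sig_norm2_le P al r_incr _ (measurable_incr h h_gt0)
  var_gt_le) _; first by rewrite mulr_ge0 ?sumr_ge0 ?ltW.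
apply: le_trans (lee_wpmul2l _ (expectation_exprn_sum_le measurable_X
  (fun p => omega_moment_le p h h_gt0 lt_h2))) _.
  by rewrite lee_fin mulr_ge0 ?ler0n ?exprn_ge0 ?mulr_ge0 ?sumr_ge0 ?ltW.
rewrite -EFinM lee_fin /two_ord exprD exprMn le_eqVlt; apply/orP; left.
by rewrite -/Cw_sum; apply/eqP; ring.
Qed.
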